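(* The infinite word $u_\beta$ has affine factor complexity (i.e. $\mathcal C(n)=an+b$ for all $n\in\mathbb N$ for some constants $a,b$) if and only if every left special factor of $u_\beta$ is a prefix of $u_\beta$.
   Context: $\beta>1$ is a simple Parry number with $d_\beta(1)=t_1\cdots t_m$, $m\ge2$, nonnegative integer digits, $t_1\ge1$, $t_m\ge1$, satisfying the Parry condition ($t_i\cdots t_m0^\omega$ lexicographically strictly smaller than $t_1\cdots t_m0^\omega$ for $2\le i\le m$). $\varphi$ is the substitution on $\mathcal A=\{0,\dots,m-1\}$ with $\varphi(k)=0^{t_{k+1}}(k+1)$ for $0\le k\le m-2$, $\varphi(m-1)=0^{t_m}$, and $u_\beta=\lim_n\varphi^n(0)$ is its fixed point. $\mathcal C(n)$ is the number of factors of $u_\beta$ of length $n$. For a factor $w$, ${\rm Lext}(w)=\{a\in\mathcal A: aw \text{ is a factor}\}$; $w$ is left special if $\#{\rm Lext}(w)\ge2$. *)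

From mathcomp Require Import all_boot all_order all_algebra.
From mathcomp Require Import boolp.
Set Implicit Arguments. Unset Strict Implicit. Unset Printing Implicit Defensive.

(* Digits d_beta(1) = t_1 ... t_m are given as t : seq nat, t_i = nth 0 t (i-1);
   m = size t.  Letters of the alphabet A = {0,...,m-1} are naturals < m. *)

Definition lex_lt (x y : nat -> nat) : Prop :=
  exists k, (forall j, j < k -> x j = y j) /\ x k < y k.

(* Parry condition: t_i ... t_m 0^omega <lex t_1 ... t_m 0^omega for 2 <= i <= m
   (0-indexed shift d = i-1 ranging over 1..m-1; nth 0 pads with zeros). *)
Definition parry_cond (t : seq nat) : Prop :=
  forall d, 1 <= d < size t ->
    lex_lt (fun j => nth 0 t (d + j)) (fun j => nth 0 t j).

Definition phi (t : seq nat) (k : nat) : seq nat :=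
  if k.+1 < size t then nseq (nth 0 t k) 0 ++ [:: k.+1]
  else nseq (nth 0 t k) 0.

Definition phi_word (t : seq nat) (s : seq nat) : seq nat := flatten (map (phi t) s).

(* u_beta = lim phi^n(0); phi^n(0) is a prefix of phi^{n+1}(0) and has length > n,
   so the i-th letter of the limit is the i-th letter of phi^{i+1}(0). *)
Definition u_beta (t : seq nat) (i : nat) : nat :=
  nth 0 (iter i.+1 (phi_word t) [:: 0]) i.

Definition is_factor (u : nat -> nat) (w : seq nat) : Prop :=
  exists i, w = mkseq (fun j => u (i + j)) (size w).

Definition complexity (t : seq nat) (n : nat) : nat :=
  #|[set w : n.-tuple 'I_(size t) |
      `[< is_factor (u_beta t) (map (@nat_of_ord _) w) >]]|.

Definition Lext (t : seq nat) (w : seq nat) : {set 'I_(size t)} :=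
  [set a : 'I_(size t) | `[< is_factor (u_beta t) (nat_of_ord a :: w) >]].

Definition left_special (t : seq nat) (w : seq nat) : Prop :=
  is_factor (u_beta t) w /\ 2 <= #|Lext t w|.

Definition is_prefix (u : nat -> nat) (w : seq nat) : Prop :=
  w = mkseq u (size w).

From mathcomp Require Import all_boot all_order all_algebra.
From mathcomp Require Import boolp.
From mathcomp Require Import zify.
Set Implicit Arguments. Unset Strict Implicit. Unset Printing Implicit Defensive.

(* The first difference of the complexity is
     C(n+1) - C(n) = \sum_(w factor, |w| = n) (#Lext(w) - 1).
   Every prefix p of u_beta is extended on the left by all m letters: phi(b)
   ends with the cyclic successor of b, so, as u_beta = phi(u_beta), an
   occurrence of b p yields one of succ(b) phi(p), and phi(p) is a longer
   prefix.  Hence C(n+1) - C(n) >= m - 1 = C(1) - C(0), with equality exactly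
   when the prefix of length n is the only left special factor of length n. *)

Definition subword (u : nat -> nat) (i n : nat) : seq nat :=
  mkseq (fun j => u (i + j)) n.

Lemma size_subword u i n : size (subword u i n) = n.
Proof. exact: size_mkseq. Qed.

Lemma subwordD u i a b :
  subword u i (a + b) = subword u i a ++ subword u (i + a) b.
Proof.
rewrite /subword /mkseq iotaD map_cat -[in iota a b](addn0 a) iotaDl -map_comp.
by congr (_ ++ _); apply: eq_map => j /=; rewrite addnA.
Qed.

Lemma subwordS u i n : subword u i n.+1 = u i :: subword u i.+1 n.
Proof. by rewrite -add1n subwordD /= addn0 addn1. Qed.

Lemma take_subword u i n n' : n <= n' -> take n (subword u i n') = subword u i n.
Proof.
by move=> le_nn'; rewrite -(subnKC le_nn') subwordD take_size_cat ?size_subword.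
Qed.

Lemma cat_inj_size (T : eqType) (s1 s2 s3 s4 : seq T) :
  size s1 = size s2 -> s1 ++ s3 = s2 ++ s4 -> s1 = s2 /\ s3 = s4.
Proof. by move=> eq_sz /eqP; rewrite eqseq_cat // => /andP[/eqP-> /eqP->]. Qed.

Lemma exists_ord_tuple m (s : seq nat) : all (fun x => x < m) s ->
  exists w : (size s).-tuple 'I_m, map (@nat_of_ord _) w = s.
Proof.
elim: s => [|x s IHs] /=; first by exists [tuple].
case/andP=> ltxm /IHs[w mapw].
by exists [tuple of Ordinal ltxm :: w]; rewrite /= mapw.
Qed.

Lemma card_asbool (T : finType) (P : T -> Prop) :
  #|[set x | `[< P x >]]| = \sum_(x : T) `[< P x >].
Proof.
by rewrite -sum1_card big_mkcond; apply: eq_bigr => x _; rewrite inE; case: asboolP.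
Qed.

Definition cyc_succ (m k : nat) : nat := if k.+1 < m then k.+1 else 0.

Lemma iter_cyc_succ m a j : a < m -> iter j (cyc_succ m) a = (a + j) %% m.
Proof.
move=> ltam; elim: j => [|j IHj]; first by rewrite addn0 modn_small.
rewrite iterS IHj /cyc_succ addnS -[(a + j).+1]addn1 -(modnDml (a + j) 1 m) addn1.
have : (a + j) %% m < m by rewrite ltn_mod; lia.
move: ((a + j) %% m) => r ltrm.
case: ifP => [ltr1m | /negbT]; first by rewrite modn_small.
by rewrite -leqNgt => le_m_r1; have -> : r.+1 = m by [lia]; rewrite modnn.
Qed.

Lemma phi_word_cat t s1 s2 :
  phi_word t (s1 ++ s2) = phi_word t s1 ++ phi_word t s2.
Proof. by rewrite /phi_word map_cat flatten_cat. Qed.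

Definition phi_iter (t : seq nat) (n : nat) : seq nat := iter n (phi_word t) [:: 0].

Section BetaExpansion.

Variable t : seq nat.
Hypothesis size_t : 2 <= size t.
Hypothesis head_t : 0 < head 0 t.
Hypothesis last_t : 0 < last 0 t.

Local Notation m := (size t).
Local Notation u := (u_beta t).
Local Notation on_alphabet := (all (fun x => x < size t)).

Lemma size_phi_gt0 k : k < m -> 0 < size (phi t k).
Proof.
move=> ltkm; rewrite /phi; case: ifP => [_|/negbT]; first by rewrite size_cat addn1.
by rewrite -leqNgt size_nseq => le_m_k1; have -> : k = m.-1 by [lia]; rewrite nth_last.
Qed.

Lemma size_phi0 : 2 <= size (phi t 0).
Proof. by rewrite /phi ifT ?size_cat ?size_nseq ?nth0 /=; lia. Qed.

Lemma phi_on_alphabet k : k < m -> on_alphabet (phi t k).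
Proof.
move=> ltkm; have zeros n : on_alphabet (nseq n 0) by apply/allP=> x /nseqP[-> _]; lia.
by rewrite /phi; case: ifP => ltk1m; rewrite ?all_cat /= ?ltk1m ?zeros.
Qed.

Lemma phi_last k : k < m -> exists x, phi t k = rcons x (cyc_succ m k).
Proof.
move=> ltkm; rewrite /phi /cyc_succ; case: ifP => [_|/negbT].
  by exists (nseq (nth 0 t k) 0); rewrite cats1.
rewrite -leqNgt => le_m_k1; have -> : k = m.-1 by [lia].
move: last_t; rewrite -nth_last; case: (nth 0 t m.-1) => [|n] // _.
by exists (nseq n 0); rewrite -cats1 -addn1 nseqD.
Qed.

Lemma phi_word_on_alphabet s : on_alphabet s -> on_alphabet (phi_word t s).
Proof.
elim: s => [|a s IHs] //= /andP[ltam /IHs]; rewrite -cat1s phi_word_cat all_cat.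
by rewrite /phi_word /= cats0 phi_on_alphabet.
Qed.

Lemma size_phi_word s : on_alphabet s -> size s <= size (phi_word t s).
Proof.
elim: s => [|a s IHs] //= /andP[ltam /IHs]; rewrite -cat1s phi_word_cat size_cat.
by rewrite /phi_word /= cats0; have := size_phi_gt0 ltam; lia.
Qed.

Lemma phi_iter_on_alphabet n : on_alphabet (phi_iter t n).
Proof.
elim: n => [|n IHn]; first by rewrite /= andbT; lia.
exact: phi_word_on_alphabet.
Qed.

Lemma phi_iter_prefix n N : n <= N -> exists s, phi_iter t N = phi_iter t n ++ s.
Proof.
have prefix_succ k : exists s, phi_iter t k.+1 = phi_iter t k ++ s.
  elim: k => [|k [s IHk]].
    rewrite /= /phi_word /= cats0 /phi ifT //; move: head_t; rewrite -nth0.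
    by case: (nth 0 t 0) => // k _; exists (nseq k 0 ++ [:: 1]).
  exists (phi_word t s).
  by rewrite /phi_iter iterS -/(phi_iter t k.+1) {1}IHk phi_word_cat.
elim: N => [|N IHN]; first by rewrite leqn0 => /eqP->; exists [::]; rewrite cats0.
rewrite leq_eqVlt => /predU1P[->|/IHN[s1 phi_iter_N]].
  by exists [::]; rewrite cats0.
by have [s2 ->] := prefix_succ N; exists (s1 ++ s2); rewrite phi_iter_N catA.
Qed.

Lemma size_phi_iter n : n < size (phi_iter t n).
Proof.
elim: n => [|n IHn] //.
have [s phi_iter_n] := phi_iter_prefix (leq0n n); rewrite /= in phi_iter_n.
have := phi_iter_on_alphabet n; rewrite phi_iter_n /= => /andP[_ s_on].
rewrite phi_iter_n -cat1s phi_word_cat size_cat.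
rewrite /phi_word /= cats0 -/(phi_word t s).
by have := size_phi0; have := size_phi_word s_on; rewrite phi_iter_n /= in IHn; lia.
Qed.

Lemma u_beta_nth i N : i < size (phi_iter t N) -> u i = nth 0 (phi_iter t N) i.
Proof.
move=> ltiN; rewrite /u_beta -/(phi_iter t i.+1).
have [s1 phi_iter_max1] := phi_iter_prefix (leq_maxl N i.+1).
have [s2 phi_iter_max2] := phi_iter_prefix (leq_maxr N i.+1).
have := congr1 (nth 0 ^~ i) phi_iter_max2.
by rewrite phi_iter_max1 !nth_cat ltiN ltnW ?size_phi_iter.
Qed.

Lemma u_beta_lt i : u i < m.
Proof.
rewrite (u_beta_nth (size_phi_iter i)).
exact: (allP (phi_iter_on_alphabet i)) _ (mem_nth 0 (size_phi_iter i)).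
Qed.

Lemma u_beta0 : u 0 = 0.
Proof. by rewrite (u_beta_nth (N := 0)). Qed.

Lemma subword_on_alphabet i n : on_alphabet (subword u i n).
Proof. by apply/allP=> x /mapP[j _ ->]; apply: u_beta_lt. Qed.

Lemma prefix_phi_iter n N : n <= size (phi_iter t N) ->
  subword u 0 n = take n (phi_iter t N).
Proof.
move=> lenN; apply: (@eq_from_nth _ 0); first by rewrite size_subword size_takel.
move=> i; rewrite size_subword => ltin.
by rewrite nth_mkseq // nth_take // add0n; apply: u_beta_nth; lia.
Qed.

(* u_beta is a fixed point of phi. *)
Lemma phi_word_prefix n :
  phi_word t (subword u 0 n) = subword u 0 (size (phi_word t (subword u 0 n))).
Proof.
rewrite (prefix_phi_iter (ltnW (size_phi_iter n))).
have phi_iter_S : phi_iter t n.+1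
    = phi_word t (take n (phi_iter t n)) ++ phi_word t (drop n (phi_iter t n)).
  by rewrite -phi_word_cat cat_take_drop.
rewrite (prefix_phi_iter (N := n.+1)); last by rewrite phi_iter_S size_cat leq_addr.
by rewrite phi_iter_S take_size_cat.
Qed.

Lemma phi_word_subword k n :
  subword u (size (phi_word t (subword u 0 k))) (size (phi_word t (subword u k n)))
  = phi_word t (subword u k n).
Proof.
have := phi_word_prefix (k + n).
rewrite subwordD add0n phi_word_cat size_cat subwordD add0n {1}phi_word_prefix.
by case/cat_inj_size; rewrite ?size_subword.
Qed.

(* Apply phi to the factor u_k u_(k+1) ... u_(k+n): the image of u_k ends with
   [cyc_succ m (u k)], and the image of the rest is again a prefix. *)
Lemma prefix_occurrence_phi k n : subword u k.+1 n = subword u 0 n ->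
  exists2 i, k <= i & u i = cyc_succ m (u k) /\
    subword u i.+1 (size (phi_word t (subword u 0 n)))
    = subword u 0 (size (phi_word t (subword u 0 n))).
Proof.
move=> occ_kn; have [x phi_uk] := phi_last (u_beta_lt k).
have := phi_word_subword k n.+1.
rewrite subwordS occ_kn -cat1s !phi_word_cat /phi_word /= cats0 phi_uk.
rewrite -/(phi_word t (subword u 0 n)) -/(phi_word t (subword u 0 k)).
rewrite -cats1 -catA !size_cat /= subwordD.
case/cat_inj_size; rewrite ?size_subword // => _.
rewrite subwordD -cat1s; case/cat_inj_size; rewrite ?size_subword // => -[uk_succ].
rewrite addn0 in uk_succ; rewrite addn1 => occ_phi.
have := size_phi_word (subword_on_alphabet 0 k); rewrite size_subword => lek.
exists (size (phi_word t (subword u 0 k)) + size x); first by lia.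
by rewrite occ_phi -phi_word_prefix.
Qed.

Definition prefix_left_ext (b n : nat) : Prop :=
  exists i, u i = b /\ subword u i.+1 n = subword u 0 n.

Lemma prefix_left_ext_le b n n' : n <= n' -> prefix_left_ext b n' -> prefix_left_ext b n.
Proof.
move=> lenn' [i [uib occ]]; exists i.
by rewrite -(take_subword _ _ lenn') occ take_subword.
Qed.

Lemma prefix_left_ext_phi b n : prefix_left_ext b n ->
  prefix_left_ext (cyc_succ m b) (size (phi_word t (subword u 0 n))).
Proof.
by case=> k [<- /prefix_occurrence_phi[i _ [uik occ]]]; exists i.
Qed.

Lemma prefix_left_ext_succ b n : prefix_left_ext b n -> prefix_left_ext (cyc_succ m b) n.
Proof.
move/prefix_left_ext_phi; apply: prefix_left_ext_le.
by have := size_phi_word (subword_on_alphabet 0 n); rewrite size_subword.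
Qed.

Lemma prefix_left_ext_grow b n : 0 < n ->
  prefix_left_ext b n -> prefix_left_ext (cyc_succ m b) n.+1.
Proof.
case: n => [|n] // _ /prefix_left_ext_phi; apply: prefix_left_ext_le.
rewrite subwordS u_beta0 -cat1s phi_word_cat size_cat /phi_word /= cats0 -/(phi_word t _).
have := size_phi0; have := size_phi_word (subword_on_alphabet 1 n).
by rewrite size_subword; lia.
Qed.

Lemma letter_occurs j : j < m -> exists k, u k = j.
Proof.
elim: j => [|j IHj] ltjm; first by exists 0; apply: u_beta0.
have [k ukj] := IHj (ltnW ltjm).
have [i _ [uik _]] := @prefix_occurrence_phi k 0 erefl.
by exists i; rewrite uik ukj /cyc_succ ltjm.
Qed.

(* The last letter m-1 occurs at a positive position, and phi(m-1) = 0^t_m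
   ends with 0: so the first letter 0 recurs at a positive position. *)
Lemma prefix_left_ext1 : exists b, prefix_left_ext b 1.
Proof.
have [k ukm] : exists k, u k = m.-1 by apply: letter_occurs; lia.
have k_gt0 : 0 < k by case: k ukm => [|k] //; rewrite u_beta0; lia.
have [[|i] leki [uik _]] := @prefix_occurrence_phi k 0 erefl; first by lia.
exists (u i), i; split => //.
by rewrite !subwordS uik ukm /cyc_succ ifF ?u_beta0 //; lia.
Qed.

Lemma prefix_left_ext_exists n : exists b, prefix_left_ext b n.
Proof.
suff [b ext_b] : exists b, prefix_left_ext b n.+1.
  by exists b; apply: prefix_left_ext_le ext_b.
elim: n => [|n [b ext_b]]; first exact: prefix_left_ext1.
by exists (cyc_succ m b); apply: prefix_left_ext_grow.
Qed.

Lemma prefix_left_ext_all b n : b < m -> prefix_left_ext b n.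
Proof.
move=> ltbm; have [a ext_a] := prefix_left_ext_exists n.
have ltam : a < m by case: ext_a => i [<- _]; apply: u_beta_lt.
have iter_ext j : prefix_left_ext (iter j (cyc_succ m) a) n.
  by elim: j => [|j IHj] //; rewrite iterS; apply: prefix_left_ext_succ.
have := iter_ext (b + m - a).
rewrite iter_cyc_succ // (_ : a + (b + m - a) = b + m); last by lia.
by rewrite modnDr modn_small.
Qed.

Lemma is_factor_subword i n : is_factor u (subword u i n).
Proof. by exists i; rewrite size_subword. Qed.

Lemma is_factor_cons_prefix b n : b < m -> is_factor u (b :: subword u 0 n).
Proof.
move=> /(prefix_left_ext_all n)[i [uib occ]]; exists i.
change (b :: subword u 0 n = subword u i (size (subword u 0 n)).+1).
by rewrite size_subword subwordS uib occ.
Qed.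

Lemma is_factor_behead a w : is_factor u (a :: w) -> is_factor u w.
Proof.
case=> i; change (a :: w = subword u i (size w).+1 -> is_factor u w).
by rewrite subwordS => -[_ ->]; apply: is_factor_subword.
Qed.

Lemma is_factor_on_alphabet w : is_factor u w -> on_alphabet w.
Proof. by case=> i ->; apply: subword_on_alphabet. Qed.

Lemma card_Lext_gt0 w : 0 < #|Lext t w| <-> is_factor u w.
Proof.
rewrite card_gt0; split=> [/set0Pn[a] | [[|k] w_at]].
- by rewrite inE => /asboolP/is_factor_behead.
- apply/set0Pn; exists (Ordinal (ltnW size_t)); rewrite inE.
  by apply/asboolP; rewrite w_at; apply: is_factor_cons_prefix; apply: ltnW.
- apply/set0Pn; exists (Ordinal (u_beta_lt k)); rewrite inE; apply/asboolP.
  exists k; change (u k :: w = subword u k (size w).+1).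
  by rewrite subwordS {1}w_at.
Qed.

Definition excess (w : seq nat) : nat := #|Lext t w| - `[< is_factor u w >].

Lemma excess_gt0 w : 0 < excess w <-> left_special t w.
Proof.
rewrite /excess /left_special.
case: (asboolP (is_factor u w)) => [w_fac | w_nfac]; rewrite ?subn1 ?subn0.
  by split=> [? | [_ ?]]; [split=> //|]; lia.
have Lext0 : ~ 0 < #|Lext t w| by move/card_Lext_gt0.
by split=> [? | [/w_nfac]] //; case: Lext0; lia.
Qed.

Lemma excess_prefix n : excess (subword u 0 n) = m.-1.
Proof.
have Lext_full : Lext t (subword u 0 n) = setT.
  by apply/setP => a; rewrite !inE; apply/asboolP/is_factor_cons_prefix.
by rewrite /excess Lext_full cardsT card_ord asboolT ?subn1 //; apply: is_factor_subword.
Qed.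

Lemma complexity0 : complexity t 0 = 1.
Proof.
rewrite /complexity (_ : [set _ | _] = setT) ?cardsT ?card_tuple //.
by apply/setP => w; rewrite !inE tuple0; apply/asboolP; exists 0.
Qed.

Lemma complexity_succ n : complexity t n.+1 =
  \sum_(w : n.-tuple 'I_m) #|Lext t (map (@nat_of_ord _) w)|.
Proof.
rewrite /complexity card_asbool; under [RHS]eq_bigr => w _ do rewrite /Lext card_asbool.
rewrite exchange_big pair_big /=.
rewrite (reindex (fun p : 'I_m * n.-tuple 'I_m => [tuple of p.1 :: p.2])) //=.
exists (fun w : n.+1.-tuple 'I_m => (thead w, [tuple of behead w])) => [[a w] _|w _].
  by rewrite theadE; congr (_, _); apply: val_inj.
by rewrite [RHS]tuple_eta.
Qed.

Lemma complexity_rec n : complexity t n.+1 =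
  complexity t n + \sum_(w : n.-tuple 'I_m) excess (map (@nat_of_ord _) w).
Proof.
rewrite complexity_succ /complexity card_asbool -big_split /=.
apply: eq_bigr => w _; rewrite /excess subnKC //.
by case: asboolP => // /card_Lext_gt0.
Qed.

Lemma sum_excess_eq n :
  \sum_(w : n.-tuple 'I_m) excess (map (@nat_of_ord _) w) = m.-1 <->
  forall w, size w = n -> left_special t w -> is_prefix u w.
Proof.
have [w0 w0_prefix] : exists w0 : n.-tuple 'I_m, map (@nat_of_ord _) w0 = subword u 0 n.
  by have := exists_ord_tuple (subword_on_alphabet 0 n); rewrite size_subword.
rewrite (bigD1 w0) //= w0_prefix excess_prefix; split=> [sum_eq w sz_w ls_w | ls_prefix].
- have /forallP excess0 : [forall (v | v != w0), excess (map (@nat_of_ord _) v) == 0].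
    by rewrite -sum_nat_eq0 -(eqn_add2l m.-1) addn0 sum_eq.
  have [wt wt_w] := exists_ord_tuple (is_factor_on_alphabet ls_w.1).
  subst n; case: (eqVneq wt w0) => [wt_w0 | wt_neq].
    by rewrite /is_prefix -wt_w wt_w0 w0_prefix size_subword.
  have /eqP := implyP (excess0 wt) wt_neq; rewrite wt_w => excess_w.
  by have := (excess_gt0 w).2 ls_w; lia.
- rewrite big1 ?addn0 // => v /eqP v_neq_w0; apply/eqP; rewrite eqn0Ngt.
  apply/negP => /excess_gt0/ls_prefix; rewrite size_map size_tuple => /(_ erefl) v_prefix.
  apply: v_neq_w0; apply/val_inj/(inj_map val_inj).
  by rewrite w0_prefix v_prefix size_map size_tuple.
Qed.

Lemma sum_excess0 : \sum_(w : 0.-tuple 'I_m) excess (map (@nat_of_ord _) w) = m.-1.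
Proof. by apply/sum_excess_eq => -[]. Qed.

End BetaExpansion.

Import GRing.Theory.
Local Open Scope ring_scope.

Lemma affine_increment (f : nat -> nat) (a b : int) :
  (forall n, (f n)%:Z = a * n%:Z + b) -> forall n, (f n.+1)%:Z = (f n)%:Z + a.
Proof. by move=> affine n; rewrite !affine -addn1 PoszD mulrDr mulr1 addrAC. Qed.

Theorem proposition3 (t : seq nat)
  (hm : (2 <= size t)%N)
  (ht1 : (1 <= head 0%N t)%N)
  (htm : (1 <= last 0%N t)%N)
  (hparry : parry_cond t) :
  (exists a b : int, forall n : nat, (complexity t n)%:Z = a * n%:Z + b)
  <-> (forall w : seq nat, left_special t w -> is_prefix (u_beta t) w).
Proof.
have sum_excess_prefix n := sum_excess_eq hm ht1 htm n.
split=> [[a [b affine]] w ls_w | ls_prefix].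
- have sum_excess_const k :
      (\sum_(v : k.-tuple 'I_(size t)) excess t (map (@nat_of_ord _) v))%:Z = a.
    apply: (@addrI _ (complexity t k)%:Z); rewrite -PoszD -(complexity_rec hm ht1 htm).
    exact: affine_increment affine k.
  have [sum_eq] := etrans (sum_excess_const (size w)) (esym (sum_excess_const 0%N)).
  by apply: (sum_excess_prefix (size w)).1 => //; rewrite sum_eq (sum_excess0 hm ht1 htm).
- have complexity_affine n : complexity t n = ((size t).-1 * n + 1)%N.
    elim: n => [|n IHn]; first by rewrite complexity0 muln0.
    rewrite (complexity_rec hm ht1 htm) IHn (sum_excess_prefix n).2 ?mulnS; first by lia.
    by move=> w _ /ls_prefix.
  by exists (size t).-1%:Z, 1 => n; rewrite complexity_affine PoszD PoszM.
Qed.
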